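(* Let $C'\subseteq\{0,1\}^n$ be nonempty, $J\subseteq[n]$ with $|J|\leq n/2$, and let $Q\subseteq[n]$ be a $J$-discerning set, i.e. $d_{TV}(U(C')[Q],U_J(C')[Q])\geq 1/8$. If $X\sim U(C')$, then $H[X[Q\setminus J]\mid X[J]]\leq |Q\setminus J|-0.0005$.
   Context: $[n]=\{1,\dots,n\}$; for $x\in\{0,1\}^n$ and $J\subseteq[n]$, $x[J]=(x_j)_{j\in J}$. $U(C')$ is the uniform distribution on $C'$, $U(C')[Q]$ the distribution of $X[Q]$ for $X\sim U(C')$. $U_J(C')$ is obtained by drawing $x\sim U(C')$ and replacing $x[[n]\setminus J]$ by an independent uniformly random vector; $U_J(C')[Q]$ is its restriction to $Q$. $d_{TV}(p,q)=\frac12\sum_a|p(a)-q(a)|$. $H$ is Shannon entropy (base 2) and $H[X\mid Y]=\sum_y\Pr[Y=y]H[X\mid Y=y]$. *)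

From HB Require Import structures.
From mathcomp Require Import all_boot all_order all_algebra.
From mathcomp Require Import all_classical all_reals all_analysis.
Set Implicit Arguments. Unset Strict Implicit. Unset Printing Implicit Defensive.
Import Order.TTheory GRing.Theory Num.Theory.
Local Open Scope ring_scope.

Notation cube n := {ffun 'I_n -> bool}.

(* x[Q], represented as an element of {0,1}^n with coordinates outside Q
   set to false (in bijection with {0,1}^Q). *)
Definition restr n (Q : {set 'I_n}) (x : cube n) : cube n :=
  [ffun i => if i \in Q then x i else false].

Definition mix n (J : {set 'I_n}) (x y : cube n) : cube n :=
  [ffun i => if i \in J then x i else y i].

Section Defs.
Variable R : realType.

Definition UQ n (C : {set cube n}) (Q : {set 'I_n}) (a : cube n) : R :=
  #|[set x in C | restr Q x == a]|%:R / #|C|%:R.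

(* U_J(C')[Q]: x ~ U(C'), y uniform on {0,1}^n independent *)
Definition UJQ n (C : {set cube n}) (J Q : {set 'I_n}) (a : cube n) : R :=
  (\sum_(x in C) \sum_(y : cube n) (restr Q (mix J x y) == a)%:R)
    / (#|C|%:R * #|{: cube n}|%:R).

Definition dTV (T : finType) (p q : T -> R) : R :=
  2^-1 * \sum_(a : T) `|p a - q a|.

Definition log2 (x : R) : R := ln x / ln 2.

Definition entropy (T : finType) (p : T -> R) : R :=
  - \sum_(a : T) (if p a == 0 then 0 else p a * log2 (p a)).

Definition PrJ n (C : {set cube n}) (J : {set 'I_n}) (b : cube n) : R :=
  #|[set x in C | restr J x == b]|%:R / #|C|%:R.

Definition condPr n (C : {set cube n}) (K J : {set 'I_n}) (b a : cube n) : R :=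
  #|[set x in C | (restr J x == b) && (restr K x == a)]|%:R
    / #|[set x in C | restr J x == b]|%:R.

Definition condH n (C : {set cube n}) (K J : {set 'I_n}) : R :=
  \sum_(b : cube n) PrJ C J b * entropy (condPr C K J b).

End Defs.

From HB Require Import structures.
From mathcomp Require Import all_boot all_order all_algebra.
From mathcomp Require Import all_classical all_reals all_analysis.
From mathcomp Require Import ring lra.
Import Order.TTheory GRing.Theory Num.Theory.
Set Implicit Arguments. Unset Strict Implicit. Unset Printing Implicit Defensive.
Local Open Scope ring_scope.

(* Write [K = Q :\: J], [b = X[J]] and [a = X[K]]. Both U(C')[Q] and
   U_J(C')[Q] are images under (b, a) |-> (b on J, a on K) of a law on pairs:
   Pr[X[J] = b] Pr[X[K] = a | X[J] = b] for the first, and Pr[X[J] = b] u(a),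
   with u uniform on {0,1}^K, for the second.  Hence the total variation
   distance is at most the average over b of dTV(p_b, u), p_b the conditional
   law of X[K].  The pointwise Pinsker-type bound
   p ln (p/u) >= (p - u) + |p - u|/9 - u/72, summed over a, gives
   2 dTV(p_b, u)/9 - 1/72 <= (|K| - H(p_b)) ln 2; averaging over b and using
   dTV >= 1/8 yields |K| - H[X[K] | X[J]] >= 1/72. *)

Section LnInequalities.
Variable R : realType.

Lemma ln_ge_1_subV (x : R) : 0 < x -> 1 - x^-1 <= ln x.
Proof.
move=> x_gt0.
have : -1 < x^-1 - 1 by have := invr_gt0 x; rewrite x_gt0; lra.
move/le_ln1Dx; rewrite addrC subrK lnV ?posrE //; lra.
Qed.

Lemma ln2_gt0 : 0 < ln (2 : R).
Proof. by apply: ln_gt0; lra. Qed.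

Lemma ln2_le1 : ln (2 : R) <= 1.
Proof. by have := @le_ln1Dx R 1; rewrite (_ : 1 + 1 = 2) //; apply; lra. Qed.

(* With [p = s^2] and [u = v^2], [ln t >= 1 - 1/t] at [t = s/v] gives
   [p ln (p/u) >= 2 s (s - v)]; the rest is a quadratic inequality in [s, v]. *)
Lemma pinsker_pointwise (p u : R) : 0 < p -> 0 < u ->
  (p - u) + 9^-1 * `|p - u| - 72^-1 * u <= p * ln (p / u).
Proof.
move=> p_gt0 u_gt0.
set s := Num.sqrt p; set v := Num.sqrt u.
have s_gt0 : 0 < s by rewrite sqrtr_gt0.
have v_gt0 : 0 < v by rewrite sqrtr_gt0.
have ps : p = s ^+ 2 by rewrite sqr_sqrtr // ltW.
have uv : u = v ^+ 2 by rewrite sqr_sqrtr // ltW.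
have ln_ratio : 2 * (1 - v / s) <= ln (p / u).
  have sv_gt0 : 0 < s / v by rewrite divr_gt0.
  rewrite ps uv -expr_div_n lnXn // -mulr_natl -invf_div.
  by have := ln_ge_1_subV sv_gt0; lra.
apply: le_trans (_ : 2 * s ^+ 2 - 2 * s * v <= _); last first.
  have -> : 2 * s ^+ 2 - 2 * s * v = p * (2 * (1 - v / s)).
    by rewrite ps; field; rewrite gt_eqF.
  by rewrite ler_pM2l.
rewrite ps uv; case: (lerP v s) => [v_le_s|s_lt_v].
- rewrite ger0_norm; last by nra.
  have : 0 <= (8 * (s - v) - v) ^+ 2 by apply: sqr_ge0.
  nra.
- rewrite ltr0_norm; last by nra.
  have : 0 <= (10 * (s - v) + v) ^+ 2 by apply: sqr_ge0.
  have : 0 <= v ^+ 2 by apply: sqr_ge0.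
  nra.
Qed.

Lemma entropy_deficit_ge_dist (T : finType) (p u : T -> R) (k : nat) :
  (forall a, 0 <= p a) -> \sum_a p a = 1 ->
  (forall a, 0 <= u a) -> \sum_a u a = 1 ->
  (forall a, 0 < p a -> 1 <= u a * 2 ^+ k) ->
  9^-1 * \sum_a `|p a - u a| - 72^-1 <= (k%:R - entropy p) * ln 2.
Proof.
move=> p_ge0 sum_p u_ge0 sum_u supp_u.
pose plogp a := if p a == 0 then 0 else p a * log2 (p a).
have ln2_pos := ln2_gt0.
have pointwise a : (p a - u a) + 9^-1 * `|p a - u a| - 72^-1 * u a
    <= plogp a * ln 2 + p a * (k%:R * ln 2).
  rewrite /plogp; case: eqP => [->|/eqP pa_neq0].
    by rewrite sub0r normrN ger0_norm // mul0r add0r; have := u_ge0 a; lra.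
  have pa_gt0 : 0 < p a by rewrite lt_def pa_neq0 p_ge0.
  have ua_large := supp_u a pa_gt0.
  have ua_gt0 : 0 < u a.
    rewrite lt_def u_ge0 andbT.
    by apply: contraTneq ua_large => ->; rewrite mul0r ler10.
  have ln_ua : 0 <= ln (u a) + k%:R * ln 2.
    by rewrite mulr_natl -lnXn // -lnM ?posrE ?exprn_gt0 //; exact: ln_ge0.
  have -> : p a * log2 (p a) * ln 2 = p a * ln (p a) by rewrite -mulrA divfK ?gt_eqF.
  have := pinsker_pointwise pa_gt0 ua_gt0; rewrite ln_div ?posrE //; nra.
have := ler_sum (index_enum T) (fun a (_ : true) => pointwise a) => /=.
rewrite !big_split /= !sumrN -!mulr_sumr -!mulr_suml sum_p sum_u /entropy -/plogp.
by rewrite opprK; lra.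
Qed.

End LnInequalities.

Section Indicators.
Variable R : numDomainType.

Lemma natr_card_set (I : finType) (P : pred I) :
  #|[set x | P x]|%:R = \sum_x (P x)%:R :> R.
Proof.
rewrite -sum1_card natr_sum big_mkcond /=.
by apply: eq_bigr => x _; rewrite inE; case: (P x).
Qed.

Lemma natr_card_setI (I : finType) (A : {pred I}) (P : pred I) :
  #|[set x in A | P x]|%:R = \sum_(x in A) (P x)%:R :> R.
Proof.
rewrite natr_card_set [RHS]big_mkcond /=.
by apply: eq_bigr => x _; case: (x \in A).
Qed.

Lemma sum_indicator (T : finType) (s : T) : \sum_t (s == t)%:R = 1 :> R.
Proof.
rewrite (bigD1 s) //= eqxx big1 ?addr0 // => t t_neq_s.
by rewrite eq_sym (negbTE t_neq_s).
Qed.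

Lemma sum_indicator_mul (T : finType) (s : T) (G : T -> R) :
  \sum_t (s == t)%:R * G t = G s.
Proof.
rewrite (bigD1 s) //= eqxx mul1r big1 ?addr0 // => t t_neq_s.
by rewrite eq_sym (negbTE t_neq_s) mul0r.
Qed.

Lemma sum_fiber (I T : finType) (P : pred I) (f : I -> T) (G : T -> R) :
  \sum_t (\sum_(x | P x) (f x == t)%:R) * G t = \sum_(x | P x) G (f x).
Proof.
under eq_bigr do rewrite mulr_suml.
by rewrite exchange_big /=; apply: eq_bigr => x _; exact: sum_indicator_mul.
Qed.

Lemma sum_norm_pushforward_le (I T : finType) (f : I -> T) (g : I -> R) :
  \sum_c `|\sum_t g t * (f t == c)%:R| <= \sum_t `|g t|.
Proof.
apply: le_trans (_ : \sum_c \sum_t `|g t| * (f t == c)%:R <= _).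
  apply: ler_sum => c _; apply: le_trans (ler_norm_sum _ _ _) _.
  by apply: ler_sum => t _; rewrite normrM normr_nat.
rewrite exchange_big /=; apply: ler_sum => t _.
by rewrite -mulr_sumr sum_indicator mulr1.
Qed.

End Indicators.

Section Restriction.
Variable n : nat.
Implicit Types (J K Q : {set 'I_n}) (x y a : cube n).

Lemma restr_id K x : restr K (restr K x) = restr K x.
Proof. by apply/ffunP => i; rewrite !ffunE; case: (i \in K). Qed.

Lemma mix_id J x : mix J x x = x.
Proof. by apply/ffunP => i; rewrite ffunE; case: (i \in J). Qed.

Lemma restr_mix_restr J Q x y :
  restr Q (mix J (restr J x) (restr (Q :\: J) y)) = restr Q (mix J x y).
Proof.
apply/ffunP => i; rewrite !ffunE.
by case iQ: (i \in Q) => //; case iJ: (i \in J); rewrite ?inE ?iJ ?iQ.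
Qed.

(* [y |-> (mix K a y, K-coordinates of y)] injects {0,1}^n into the fiber of
   [a] times the subsets of [K]. *)
Lemma card_restr_fiber K a : restr K a = a ->
  (2 ^ n <= #|[set y | restr K y == a]| * 2 ^ #|K|)%N.
Proof.
move=> a_restr.
pose h y := (mix K a y, [set i in K | y i]).
have h_inj : injective h.
  move=> y1 y2 [/ffunP mix_eq /setP set_eq]; apply/ffunP => i.
  have := mix_eq i; have := set_eq i; rewrite !ffunE !inE.
  by case: (i \in K) => //= ->.
have -> : (2 ^ n)%N = #|{: cube n}| by rewrite card_ffun card_bool card_ord.
rewrite -card_powerset -cardsX -cardsT -(card_imset _ h_inj).
apply: fintype.subset_leq_card.
apply/fintype.subsetP => _ /imsetP [y _ ->]; rewrite !inE /=; apply/andP; split.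
  by rewrite -{2}a_restr; apply/eqP/ffunP => i; rewrite !ffunE; case: (i \in K).
by apply/fintype.subsetP => i; rewrite inE => /andP [].
Qed.

End Restriction.

Section ConditionalEntropyDeficit.
Variables (R : realType) (n : nat) (C : {set cube n}) (J Q : {set 'I_n}).
Hypothesis C_gt0 : (0 < #|C|)%N.

Local Notation K := (Q :\: J).
Local Notation M := (#|C|%:R : R).
Local Notation N := (#|{: cube n}|%:R : R).

Definition countJ b : R := #|[set x in C | restr J x == b]|%:R.
Definition countJK b a : R :=
  #|[set x in C | (restr J x == b) && (restr K x == a)]|%:R.
Definition unifK a : R := N^-1 * \sum_y (restr K y == a)%:R.
Definition dev b a := countJK b a - countJ b * unifK a.
Definition glue b a := restr Q (mix J b a).

Lemma M_gt0 : 0 < M. Proof. by rewrite ltr0n. Qed.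

Lemma N_gt0 : 0 < N.
Proof. by rewrite ltr0n card_ffun card_bool card_ord expn_gt0. Qed.

Lemma UQ_pushforward c :
  UQ R C Q c = M^-1 * \sum_b \sum_a countJK b a * (glue b a == c)%:R.
Proof.
rewrite /UQ natr_card_setI mulrC pair_bigA /=; congr (_ * _).
transitivity (\sum_(x in C) (glue (restr J x) (restr K x) == c)%:R : R).
  by apply: eq_bigr => x _; rewrite /glue restr_mix_restr mix_id.
rewrite -(sum_fiber (fun x => x \in C) (fun x => (restr J x, restr K x))
                    (fun p => (glue p.1 p.2 == c)%:R)).
by apply: eq_bigr => -[b a] _; rewrite /countJK natr_card_setI.
Qed.

Lemma UJQ_pushforward c :
  UJQ R C J Q c = M^-1 * \sum_b \sum_a countJ b * unifK a * (glue b a == c)%:R.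
Proof.
rewrite /UJQ invfM mulrC -mulrA mulr_sumr; congr (_ * _).
transitivity (\sum_(x in C) \sum_y N^-1 * (glue (restr J x) (restr K y) == c)%:R).
  apply: eq_bigr => x _; rewrite mulr_sumr.
  by apply: eq_bigr => y _; rewrite /glue restr_mix_restr.
rewrite -(sum_fiber (fun x => x \in C) (restr J)
                    (fun b => \sum_y N^-1 * (glue b (restr K y) == c)%:R)).
apply: eq_bigr => b _.
rewrite [RHS](eq_bigr _ (fun a _ => esym (mulrA _ _ _))) -[in RHS]mulr_sumr.
rewrite /countJ natr_card_setI; congr (_ * _).
rewrite /unifK; under [RHS]eq_bigr do rewrite -mulrA mulrCA.
by rewrite sum_fiber.
Qed.

Lemma sum_countJK b : \sum_a countJK b a = countJ b.
Proof.
rewrite /countJK /countJ natr_card_setI.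
under eq_bigr do rewrite natr_card_setI.
rewrite exchange_big /=; apply: eq_bigr => x _.
by case: (restr J x == b) => /=; [rewrite sum_indicator | rewrite big1].
Qed.

Lemma sum_countJ : \sum_b countJ b = M.
Proof.
transitivity (\sum_b (\sum_(x in C) (restr J x == b)%:R) * 1 : R).
  by apply: eq_bigr => b _; rewrite /countJ natr_card_setI mulr1.
by rewrite sum_fiber sumr_const.
Qed.

Lemma sum_unifK : \sum_a unifK a = 1.
Proof.
transitivity (N^-1 * \sum_a (\sum_y (restr K y == a)%:R) * 1).
  by rewrite mulr_sumr; apply: eq_bigr => a _; rewrite mulr1.
by rewrite sum_fiber sumr_const mulVf // gt_eqF // N_gt0.
Qed.

Lemma countJK_le_countJ b a : countJK b a <= countJ b.
Proof.
rewrite ler_nat; apply: fintype.subset_leq_card; apply/fintype.subsetP => x.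
by rewrite !inE => /and3P [-> -> _].
Qed.

Lemma unifK_support b a : 0 < countJK b a -> 1 <= unifK a * 2 ^+ #|K|.
Proof.
rewrite ltr0n card_gt0 => /set0Pn [x]; rewrite inE => /and3P [_ _ /eqP xK].
have a_restr : restr K a = a by rewrite -xK restr_id.
have := card_restr_fiber a_restr; rewrite -(ler_nat R) !natrM !natrX.
rewrite /unifK -natr_card_set -mulrA ler_pdivlMl ?N_gt0 // mulr1.
by rewrite card_ffun card_bool card_ord natrX.
Qed.

Lemma dist_le_entropy_deficit_fiber b :
  9^-1 * \sum_a `|dev b a| - 72^-1 * countJ b
  <= countJ b * ((#|K|%:R - entropy (condPr R C K J b)) * ln 2).
Proof.
have [countJ_eq0 | countJ_neq0] := eqVneq (countJ b) 0.
  have dev_eq0 a : dev b a = 0.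
    apply/eqP; rewrite /dev countJ_eq0 mul0r subr0 eq_le ler0n andbT.
    by rewrite -countJ_eq0 countJK_le_countJ.
  under eq_bigr do rewrite dev_eq0 normr0.
  by rewrite big1 // countJ_eq0 !(mulr0, mul0r) subr0.
have countJ_gt0 : 0 < countJ b by rewrite lt_def countJ_neq0 ler0n.
set p := condPr R C K J b.
have pE a : p a = countJK b a / countJ b by [].
have p_ge0 a : 0 <= p a by rewrite pE divr_ge0 ?ler0n.
have sum_p : \sum_a p a = 1.
  by under eq_bigr do rewrite pE; rewrite -mulr_suml sum_countJK divff.
have unifK_ge0 a : 0 <= unifK a by rewrite mulr_ge0 ?invr_ge0 ?ler0n ?sumr_ge0.
have supp a : 0 < p a -> 1 <= unifK a * 2 ^+ #|K|.
  by rewrite pE pmulr_lgt0 ?invr_gt0 //; exact: unifK_support.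
have := entropy_deficit_ge_dist p_ge0 sum_p unifK_ge0 sum_unifK supp.
rewrite -(ler_pM2l countJ_gt0) => /(le_trans _); apply.
have -> : \sum_a `|dev b a| = countJ b * \sum_a `|p a - unifK a|.
  rewrite mulr_sumr; apply: eq_bigr => a _.
  rewrite -[countJ b]ger0_norm ?ler0n // -normrM mulrBr pE mulrCA divff //.
  by rewrite mulr1.
lra.
Qed.

Lemma dTV_le_dev :
  dTV (UQ R C Q) (UJQ R C J Q) <= 2^-1 * (M^-1 * \sum_b \sum_a `|dev b a|).
Proof.
rewrite /dTV ler_wpM2l ?invr_ge0 ?ler0n //.
have -> : \sum_c `|UQ R C Q c - UJQ R C J Q c|
    = M^-1 * \sum_c `|\sum_p dev p.1 p.2 * (glue p.1 p.2 == c)%:R|.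
  rewrite mulr_sumr; apply: eq_bigr => c _.
  rewrite UQ_pushforward UJQ_pushforward -mulrBr normrM.
  rewrite ger0_norm ?invr_ge0 ?ler0n //.
  rewrite !pair_bigA -sumrB; congr (_ * `|_|); apply: eq_bigr => p _.
  by rewrite /dev mulrBl.
rewrite ler_wpM2l ?invr_ge0 ?ler0n // pair_bigA.
exact: (sum_norm_pushforward_le (fun p => glue p.1 p.2) (fun p => dev p.1 p.2)).
Qed.

Lemma entropy_deficit_ge_dev :
  9^-1 * (M^-1 * \sum_b \sum_a `|dev b a|) - 72^-1
  <= (#|K|%:R - condH R C K J) * ln 2.
Proof.
have := ler_sum (index_enum _)
  (fun b (_ : true) => dist_le_entropy_deficit_fiber b).
rewrite big_split /= sumrN -!mulr_sumr sum_countJ.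
set S := \sum_b _; set H := fun b => entropy (condPr R C K J b).
have M_condH : M * condH R C K J = \sum_b countJ b * H b.
  rewrite /condH mulr_sumr; apply: eq_bigr => b _.
  by rewrite /PrJ; field; rewrite gt_eqF ?M_gt0.
have -> : \sum_b countJ b * ((#|K|%:R - H b) * ln 2)
    = M * ((#|K|%:R - condH R C K J) * ln 2).
  rewrite mulrBl mulrBr !mulrA M_condH -sum_countJ !mulr_suml -sumrB.
  by apply: eq_bigr => b _; ring.
have -> : 9^-1 * (M^-1 * S) - 72^-1 = M^-1 * (9^-1 * S - 72^-1 * M).
  by field; rewrite gt_eqF ?M_gt0.
by rewrite ler_pdivrMl ?M_gt0.
Qed.
End ConditionalEntropyDeficit.

Theorem lemma10 (R : realType) (n : nat) (C : {set cube n}) (J Q : {set 'I_n}) :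
  (0 < #|C|)%N ->
  (2 * #|J| <= n)%N ->
  dTV (UQ R C Q) (UJQ R C J Q) >= 8^-1 ->
  condH R C (Q :\: J) J <= #|Q :\: J|%:R - 5 / 10000.
Proof.
move=> C_gt0 _ discerning.
have dist_ge := le_trans discerning (@dTV_le_dev R n C J Q).
have deficit := @entropy_deficit_ge_dev R n C J Q C_gt0.
have ln2_pos := @ln2_gt0 R; have ln2_le := @ln2_le1 R.
set H := condH _ _ _ _ in deficit *; set k := #|Q :\: J|%:R in deficit *.
have : 72^-1 <= (k - H) * ln 2 by lra.
nra.
Qed.
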